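(* In a partial synchronized communication system whose communication graph is an $n\times m$ grid communication graph, two starving robots can never be (at the same time) on circles lying in the same row.
   Context: Model. A system consists of pairwise disjoint unit circles in the plane (trajectories) and a communication range $r>0$. Its communication graph $G$ has the circles as vertices, two adjacent iff the distance between their centres is at most $2+r$. Positions on a circle are angles (mod $2\pi$). For an edge $(i,j)$, the link position $\phi_{ij}$ is the angle of the point of $C_i$ closest to $C_j$. A schedule $F=(f,g)$ assigns each circle a starting angle $f(C_i)$ and direction $g(C_i)\in\{1,-1\}$; a robot following it on $C_i$ is at $f(C_i)+g(C_i)2\pi t$ at time $t$. $F$ is a synchronization schedule if $g(C_i)=-g(C_j)$ for adjacent circles and robots following $F$ on adjacent $C_i,C_j$ are at $\phi_{ij},\phi_{ji}$ at exactly the same times. A synchronized communication system (SCS) consists of robots, initially one per circle, following a synchronization schedule, with the switching rule: when a robot on $C_i$ reaches $\phi_{ij}$ and $C_j$ is empty, it instantly passes to $C_j$ and follows the schedule of $C_j$; if $C_j$ has a robot, they meet and each stays on its circle. A partial SCS arises by letting some robots leave (possibly at different times); remaining robots never leave. A surviving robot $u$ starves if every time $u$ arrives at a link position $\phi_{ij}$ of its current circle $C_i$, the circle $C_j$ is empty. Grid. The $n\times m$ grid communication graph consists of $nm$ unit circles, circle $(i,j)$ in row $i$ (rows horizontal) and column $j$ (columns vertical), centres on a square lattice, circle $(i,j)$ adjacent exactly to the existing circles $(i\pm1,j)$, $(i,j\pm1)$. *)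

From Stdlib Require Import Reals Lra Lia ZArith.
Open Scope R_scope.

(* A circle of the n x m grid is identified with its (row, column) pair. *)
Definition cell := (nat * nat)%type.

Definition in_grid (n m : nat) (c : cell) : Prop :=
  (fst c < n)%nat /\ (snd c < m)%nat.

Definition adj (n m : nat) (c c' : cell) : Prop :=
  in_grid n m c /\ in_grid n m c' /\
  ((fst c = fst c' /\ (snd c' = S (snd c) \/ snd c = S (snd c'))) \/
   (snd c = snd c' /\ (fst c' = S (fst c) \/ fst c = S (fst c')))).

(* Link position phi_{c c'}: angle of the point of C_c closest to C_c',
   i.e. the direction from the centre of c to the centre of c'.
   Columns increase to the right (angle 0), rows increase downwards
   (angle 3*PI/2). Only meaningful for adjacent c, c'. *)
Definition phi (c c' : cell) : R :=
  if Nat.eqb (snd c') (S (snd c)) then 0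
  else if Nat.eqb (snd c) (S (snd c')) then PI
  else if Nat.eqb (fst c') (S (fst c)) then 3 * PI / 2
  else PI / 2.

Definition angeq (a b : R) : Prop := exists k : Z, a - b = IZR k * (2 * PI).

Definition pos (f g : cell -> R) (c : cell) (t : R) : R :=
  f c + g c * (2 * PI) * t.

Definition sync_schedule (n m : nat) (f g : cell -> R) : Prop :=
  (forall c, in_grid n m c -> g c = 1 \/ g c = -1) /\
  (forall c c', adj n m c c' ->
     g c = - g c' /\
     (forall t, 0 <= t ->
        (angeq (pos f g c t) (phi c c') <-> angeq (pos f g c' t) (phi c' c)))).

(* Robots are named by their initial circle.  loc u t is the circle robot u
   is on at time t (after any switch happening at time t); L u is the time
   at which u leaves (None = u never leaves, i.e. u survives). *)
Definition present (L : cell -> option R) (u : cell) (t : R) : Prop :=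
  match L u with None => True | Some l => t < l end.

(* prev_at loc u t c: robot u arrives at time t on circle c, i.e. c is the
   circle it is on just before t (its initial circle at t = 0). *)
Definition prev_at (loc : cell -> R -> cell) (u : cell) (t : R) (c : cell) : Prop :=
  (t = 0 /\ c = u) \/
  (0 < t /\ exists eps, 0 < eps /\ forall s, t - eps < s < t -> loc u s = c).

Definition occupied (n m : nat) (loc : cell -> R -> cell) (L : cell -> option R)
    (c : cell) (t : R) : Prop :=
  exists v, in_grid n m v /\ present L v t /\ prev_at loc v t c.

Definition partial_scs_run (n m : nat) (f g : cell -> R)
    (loc : cell -> R -> cell) (L : cell -> option R) : Prop :=
  (* piecewise constant motion between circles: left limits exist ... *)
  (forall u t, in_grid n m u -> 0 <= t -> present L u t ->
     exists c, prev_at loc u t c) /\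
  (forall u t, in_grid n m u -> 0 <= t -> present L u t ->
     exists eps, 0 < eps /\ forall s, t <= s < t + eps -> loc u s = loc u t) /\
  (forall u t c, in_grid n m u -> 0 <= t -> present L u t -> prev_at loc u t c ->
     (forall c', adj n m c c' -> angeq (pos f g c t) (phi c c') ->
        ~ occupied n m loc L c' t -> loc u t = c') /\
     ((forall c', adj n m c c' -> angeq (pos f g c t) (phi c c') ->
        occupied n m loc L c' t) -> loc u t = c)).

Definition starves (n m : nat) (f g : cell -> R)
    (loc : cell -> R -> cell) (L : cell -> option R) (u : cell) : Prop :=
  L u = None /\
  forall t c c', 0 < t -> prev_at loc u t c -> adj n m c c' ->
    angeq (pos f g c t) (phi c c') -> ~ occupied n m loc L c' t.

(* A synchronization schedule of the grid is rigid: directions alternate like a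
   checkerboard and a single phase [tau] fixes all starting angles, so link
   positions are reached only at the event times [tau + K/4], horizontal links at
   even [K] and vertical ones at odd [K].  A starving robot never finds the
   neighbouring circle occupied, so it switches at every link it reaches: it
   performs a fixed walk on the grid, whatever the other robots do.  At odd events
   this walk moves vertically in a way that depends only on the row, so two walks
   starting in a common row stay in a common row, and at even events they keep
   their left-to-right order unless they face each other.  Every walk eventually
   visits the last column, so two starving robots in one row would at some event
   face each other, and each would then find the other's circle occupied. *)

From Stdlib Require Import Reals Lra Lia ZArith Classical.
Open Scope R_scope.

Ltac mod_lia := Z.div_mod_to_equations; lia.

Lemma angeq_refl a : angeq a a.
Proof. exists 0%Z. simpl. ring. Qed.

Lemma angeq_trans a b c : angeq a b -> angeq b c -> angeq a c.
Proof. intros [k H] [l H']. exists (k + l)%Z. rewrite plus_IZR. lra. Qed.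

Lemma angeq_add a b c d : angeq a b -> angeq c d -> angeq (a + c) (b + d).
Proof. intros [k H] [l H']. exists (k + l)%Z. rewrite plus_IZR. lra. Qed.

Lemma angeq_opp a b : angeq a b -> angeq (- a) (- b).
Proof. intros [k H]. exists (- k)%Z. rewrite opp_IZR. lra. Qed.

Lemma Rmult_PI_eq0 x : PI * x = 0 -> x = 0.
Proof. pose proof PI_RGT_0. intros Hx. destruct (Rmult_integral _ _ Hx); lra. Qed.

(** * Grid geometry *)

Lemma adj_right n m i j : (i < n)%nat -> (S j < m)%nat -> adj n m (i, j) (i, S j).
Proof.
  intros. unfold adj, in_grid; cbn [fst snd].
  split; [lia | split; [lia |]]. left; split; [reflexivity | left; reflexivity].
Qed.

Lemma adj_left n m i j : (i < n)%nat -> (S j < m)%nat -> adj n m (i, S j) (i, j).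
Proof.
  intros. unfold adj, in_grid; cbn [fst snd].
  split; [lia | split; [lia |]]. left; split; [reflexivity | right; reflexivity].
Qed.

Lemma adj_down n m i j : (S i < n)%nat -> (j < m)%nat -> adj n m (i, j) (S i, j).
Proof.
  intros. unfold adj, in_grid; cbn [fst snd].
  split; [lia | split; [lia |]]. right; split; [reflexivity | left; reflexivity].
Qed.

Lemma adj_up n m i j : (S i < n)%nat -> (j < m)%nat -> adj n m (S i, j) (i, j).
Proof.
  intros. unfold adj, in_grid; cbn [fst snd].
  split; [lia | split; [lia |]]. right; split; [reflexivity | right; reflexivity].
Qed.

Lemma adj_sym n m a b : adj n m a b -> adj n m b a.
Proof. unfold adj. intros [H1 [H2 H3]]. split; [exact H2 | split; [exact H1 | lia]]. Qed.

(* Quarter turns from [c] towards [c']: 0 = next column, 1 = previous row,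
   2 = previous column, 3 = next row. *)
Definition dir (c c' : cell) : Z :=
  if Nat.eqb (snd c') (S (snd c)) then 0
  else if Nat.eqb (snd c) (S (snd c')) then 2
  else if Nat.eqb (fst c') (S (fst c)) then 3
  else 1.

Lemma phi_dir c c' : phi c c' = PI / 2 * IZR (dir c c').
Proof.
  unfold phi, dir.
  destruct (Nat.eqb _ _); [simpl; ring |].
  destruct (Nat.eqb _ _); [simpl; field |].
  destruct (Nat.eqb _ _); simpl; field.
Qed.

Lemma dir_range c c' : (0 <= dir c c' < 4)%Z.
Proof. unfold dir. repeat destruct (Nat.eqb _ _); lia. Qed.

Lemma dir_right i j : dir (i, j) (i, S j) = 0%Z.
Proof. unfold dir; simpl. now rewrite Nat.eqb_refl. Qed.

Lemma dir_left i j : dir (i, S j) (i, j) = 2%Z.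
Proof.
  unfold dir; simpl. replace (Nat.eqb j (S (S j))) with false by (symmetry; apply Nat.eqb_neq; lia).
  now rewrite Nat.eqb_refl.
Qed.

Lemma dir_down i j : dir (i, j) (S i, j) = 3%Z.
Proof.
  unfold dir; simpl. replace (Nat.eqb j (S j)) with false by (symmetry; apply Nat.eqb_neq; lia).
  now rewrite Nat.eqb_refl.
Qed.

Lemma dir_up i j : dir (S i, j) (i, j) = 1%Z.
Proof.
  unfold dir; simpl. replace (Nat.eqb j (S j)) with false by (symmetry; apply Nat.eqb_neq; lia).
  now replace (Nat.eqb i (S (S i))) with false by (symmetry; apply Nat.eqb_neq; lia).
Qed.

Definition neighbour (c : cell) (q : Z) : cell :=
  if Z.eqb q 0 then (fst c, S (snd c))
  else if Z.eqb q 1 then (pred (fst c), snd c)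
  else if Z.eqb q 2 then (fst c, pred (snd c))
  else (S (fst c), snd c).

Definition has_neighbour (n m : nat) (c : cell) (q : Z) : bool :=
  if Z.eqb q 0 then Nat.ltb (S (snd c)) m
  else if Z.eqb q 1 then Nat.ltb 0 (fst c)
  else if Z.eqb q 2 then Nat.ltb 0 (snd c)
  else Nat.ltb (S (fst c)) n.

Lemma neighbour_adj n m c q : in_grid n m c -> (0 <= q < 4)%Z -> has_neighbour n m c q = true ->
  adj n m c (neighbour c q) /\ dir c (neighbour c q) = q.
Proof.
  destruct c as [i j]. unfold in_grid, has_neighbour, neighbour; cbn [fst snd].
  intros Hin Hq.
  destruct (Z.eqb_spec q 0) as [-> |]; [intros H; apply Nat.ltb_lt in H;
    split; [apply adj_right; lia | apply dir_right] |].
  destruct (Z.eqb_spec q 1) as [-> |]; [intros H; apply Nat.ltb_lt in H;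
    destruct i as [| i]; [lia |]; split; [apply adj_up; lia | apply dir_up] |].
  destruct (Z.eqb_spec q 2) as [-> |]; [intros H; apply Nat.ltb_lt in H;
    destruct j as [| j]; [lia |]; split; [apply adj_left; lia | apply dir_left] |].
  intros H; apply Nat.ltb_lt in H. replace q with 3%Z by lia.
  split; [apply adj_down; lia | apply dir_down].
Qed.

Lemma adj_neighbour n m c c' : adj n m c c' ->
  c' = neighbour c (dir c c') /\ has_neighbour n m c (dir c c') = true.
Proof.
  destruct c as [i j], c' as [i' j']. unfold adj, in_grid; cbn [fst snd].
  intros [H1 [H2 [[-> [-> | ->]] | [-> [-> | ->]]]]];
    rewrite ?dir_right, ?dir_left, ?dir_down, ?dir_up;
    unfold neighbour, has_neighbour; simpl; split; auto; apply Nat.ltb_lt; lia.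
Qed.

(** * Synchronization schedules of the grid *)

Lemma sync_phase_sum (f g : cell -> R) c c' p p' :
  (g c = 1 \/ g c = -1) -> g c' = - g c ->
  (forall t, 0 <= t -> (angeq (pos f g c t) p <-> angeq (pos f g c' t) p')) ->
  angeq (f c' + f c) (p + p').
Proof.
  intros Hg Hg' Hsync.
  pose proof PI_RGT_0 as HPI.
  (* at a time t0 >= 0 when the robot on c is at p, the one on c' is at p' *)
  set (x := g c * (p - f c) / (2 * PI)).
  destruct (archimed (- x)) as [Hup _].
  set (u := up (- x)) in *.
  set (k := if Rle_dec 0 (g c) then u else (- u)%Z).
  set (t0 := x + IZR u).
  assert (Ht0 : g c * (2 * PI) * t0 = p - f c + IZR k * (2 * PI)).
  { unfold t0, x, k. clearbody u.
    destruct (Rle_dec 0 (g c)), Hg as [Hg | Hg]; rewrite Hg in *;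
      try lra; try rewrite opp_IZR; field; lra. }
  assert (Hc : angeq (pos f g c t0) p) by (exists k; unfold pos; lra).
  apply Hsync in Hc; [| unfold t0; lra].
  destruct Hc as [z Hz]. unfold pos in Hz. rewrite Hg' in Hz.
  exists (z + k)%Z. rewrite plus_IZR. lra.
Qed.

Definition orientation (s : Z) (c : cell) : Z :=
  if Nat.even (fst c + snd c) then s else (- s)%Z.

(* At time [tau] every robot following the schedule sits at angle [PI * j],
   [j] the column of its circle. *)
Definition sync_form (f g : cell -> R) (tau : R) (s : Z) (c : cell) : Prop :=
  g c = IZR (orientation s c) /\
  angeq (f c) (- g c * (2 * PI) * tau + PI * INR (snd c)).

Lemma orientation_unit s c : (s = 1 \/ s = -1)%Z ->
  (orientation s c = 1 \/ orientation s c = -1)%Z.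
Proof. unfold orientation. destruct (Nat.even _); lia. Qed.

Lemma orientation_right s i j : orientation s (i, S j) = (- orientation s (i, j))%Z.
Proof.
  unfold orientation; cbn [fst snd].
  rewrite Nat.add_succ_r, Nat.even_succ, <- Nat.negb_even.
  destruct (Nat.even (i + j)); simpl; lia.
Qed.

Lemma orientation_down s i j : orientation s (S i, j) = (- orientation s (i, j))%Z.
Proof.
  unfold orientation; cbn [fst snd].
  rewrite Nat.add_succ_l, Nat.even_succ, <- Nat.negb_even.
  destruct (Nat.even (i + j)); simpl; lia.
Qed.

Section SyncForm.

Variables (n m : nat) (f g : cell -> R) (tau : R) (s : Z).
Hypothesis sync : sync_schedule n m f g.

Lemma sync_adjacent c c' : adj n m c c' ->
  g c' = - g c /\ angeq (f c' + f c) (phi c c' + phi c' c).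
Proof.
  intros Hadj. destruct sync as [Hg Hs]. destruct (Hs c c' Hadj) as [Hgg Hiff].
  assert (Hg' : g c' = - g c) by lra.
  split; [exact Hg' | apply (sync_phase_sum f g); auto; apply Hg, Hadj].
Qed.

Lemma sync_form_right i j : in_grid n m (i, S j) ->
  sync_form f g tau s (i, j) -> sync_form f g tau s (i, S j).
Proof.
  intros Hin [Hg Hf]. destruct Hin as [Hi Hj]; cbn [fst snd] in *.
  destruct (sync_adjacent _ _ (adj_right n m i j Hi Hj)) as [Hg' Hsum].
  rewrite !phi_dir, dir_right, dir_left in Hsum. simpl IZR in Hsum.
  split; [rewrite orientation_right, opp_IZR, <- Hg; exact Hg' |].
  assert (Hflip : angeq (f (i, S j)) (PI - f (i, j))).
  { destruct Hsum as [k Hk]. exists k. lra. }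
  eapply angeq_trans; [exact Hflip |].
  eapply angeq_trans; [exact (angeq_add _ _ _ _ (angeq_refl PI) (angeq_opp _ _ Hf)) |].
  exists (- Z.of_nat j)%Z. rewrite opp_IZR, <- INR_IZR_INZ. cbn [snd]. rewrite S_INR, Hg'. ring.
Qed.

Lemma sync_form_down i j : in_grid n m (S i, j) ->
  sync_form f g tau s (i, j) -> sync_form f g tau s (S i, j).
Proof.
  intros Hin [Hg Hf]. destruct Hin as [Hi Hj]; cbn [fst snd] in *.
  destruct (sync_adjacent _ _ (adj_down n m i j Hi Hj)) as [Hg' Hsum].
  rewrite !phi_dir, dir_down, dir_up in Hsum. simpl IZR in Hsum.
  split; [rewrite orientation_down, opp_IZR, <- Hg; exact Hg' |].
  assert (Hflip : angeq (f (S i, j)) (- f (i, j))).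
  { destruct Hsum as [k Hk]. exists (k + 1)%Z. rewrite plus_IZR. lra. }
  eapply angeq_trans; [exact Hflip |].
  eapply angeq_trans; [exact (angeq_opp _ _ Hf) |].
  exists (- Z.of_nat j)%Z. rewrite opp_IZR, <- INR_IZR_INZ. cbn [snd]. rewrite Hg'. ring.
Qed.

Lemma sync_form_spread : sync_form f g tau s (0, 0)%nat ->
  forall c, in_grid n m c -> sync_form f g tau s c.
Proof.
  intros H00 [i j] [Hi Hj]; cbn [fst snd] in *.
  assert (Hrow : forall j, (j < m)%nat -> sync_form f g tau s (0%nat, j)).
  { induction j0 as [| j0 IH]; intros Hj0; [exact H00 |].
    apply sync_form_right; [split; cbn; lia | apply IH; lia]. }
  induction i as [| i IH]; [now apply Hrow |].
  apply sync_form_down; [split; cbn; lia | apply IH; lia].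
Qed.

End SyncForm.

Lemma sync_schedule_form n m f g : sync_schedule n m f g -> (0 < n)%nat -> (0 < m)%nat ->
  exists tau s, (s = 1 \/ s = -1)%Z /\ forall c, in_grid n m c -> sync_form f g tau s c.
Proof.
  intros Hsync Hn Hm.
  assert (Hg : g (0, 0)%nat = 1 \/ g (0, 0)%nat = -1) by (apply (proj1 Hsync); split; cbn; lia).
  pose proof PI_RGT_0 as HPI.
  set (s := if Rle_dec 0 (g (0, 0)%nat) then 1%Z else (-1)%Z).
  exists (- f (0, 0)%nat * g (0, 0)%nat / (2 * PI)), s.
  split; [unfold s; destruct (Rle_dec _ _); auto |].
  apply sync_form_spread; [exact Hsync |]. split.
  - unfold orientation, s; simpl.
    destruct (Rle_dec _ _), Hg as [Hg1 | Hg1]; rewrite Hg1 in *; simpl; lra.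
  - exists 0%Z. cbn [snd INR]. destruct Hg as [Hg1 | Hg1]; rewrite Hg1; field; lra.
Qed.

(** * Link events *)

Definition event_time (tau : R) (K : Z) : R := tau + IZR K / 4.

(* The link position, in quarter turns, of the robot on [c] at event [K]. *)
Definition facing (s : Z) (c : cell) (K : Z) : Z :=
  (orientation s c * K + 2 * Z.of_nat (snd c)) mod 4.

Lemma facing_range s c K : (0 <= facing s c K < 4)%Z.
Proof. unfold facing. apply Z.mod_pos_bound. lia. Qed.

Lemma event_time_lt tau K K' : event_time tau K < event_time tau K' <-> (K < K')%Z.
Proof.
  unfold event_time. split; intros H.
  - apply lt_IZR. lra.
  - apply IZR_lt in H. lra.
Qed.

Lemma event_time_le tau K K' : (K <= K')%Z -> event_time tau K <= event_time tau K'.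
Proof. unfold event_time. intros H. apply IZR_le in H. lra. Qed.

Lemma event_time_inj tau K K' : event_time tau K = event_time tau K' -> K = K'.
Proof. unfold event_time. intros H. apply eq_IZR. lra. Qed.

Section LinkEvents.

Variables (f g : cell -> R) (tau : R) (s : Z) (c : cell).
Hypothesis s_unit : (s = 1 \/ s = -1)%Z.
Hypothesis form : sync_form f g tau s c.

Lemma quarter_angle_iff t q :
  angeq (pos f g c t) (PI / 2 * IZR q) <->
  exists K, t = event_time tau K /\ facing s c K = (q mod 4)%Z.
Proof.
  destruct form as [Hg [k1 H1]]. unfold pos, facing. rewrite Hg in *.
  rewrite INR_IZR_INZ in H1.
  set (j := Z.of_nat (snd c)) in *. set (o := orientation s c) in *.
  assert (Ho : (o = 1 \/ o = -1)%Z) by apply orientation_unit, s_unit.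
  split.
  - intros [k2 H2]. exists (o * (4 * (k2 - k1) - 2 * j + q))%Z.
    split; [| destruct Ho as [-> | ->]; mod_lia].
    assert (E : PI * (4 * (t - tau) - IZR o * (4 * (IZR k2 - IZR k1) - 2 * IZR j + IZR q)) = 0)
      by (destruct Ho as [Ho | Ho]; rewrite Ho in *; simpl IZR in *; lra).
    apply Rmult_PI_eq0 in E.
    unfold event_time. rewrite mult_IZR, plus_IZR, minus_IZR, mult_IZR, minus_IZR, mult_IZR.
    simpl IZR. lra.
  - intros [K [-> HK]].
    set (z := ((o * K + 2 * j) / 4 - q / 4)%Z).
    assert (Hz : (q = o * K + 2 * j - 4 * z)%Z) by (unfold z; mod_lia).
    apply (f_equal IZR) in Hz. rewrite minus_IZR, plus_IZR, !mult_IZR in Hz.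
    exists (k1 + z)%Z. unfold event_time. rewrite plus_IZR, Hz. simpl IZR in *. lra.
Qed.

Lemma at_link_iff c' t :
  angeq (pos f g c t) (phi c c') <->
  exists K, t = event_time tau K /\ facing s c K = dir c c'.
Proof.
  rewrite phi_dir, quarter_angle_iff, Z.mod_small by apply dir_range. reflexivity.
Qed.

End LinkEvents.

(** * The walk of a starving robot *)

Definition step (n m : nat) (s : Z) (c : cell) (K : Z) : cell :=
  if has_neighbour n m c (facing s c K) then neighbour c (facing s c K) else c.

Fixpoint trajectory (n m : nat) (s : Z) (c : cell) (K : Z) (N : nat) : cell :=
  match N with
  | O => c
  | S N' => step n m s (trajectory n m s c K N') (K + Z.of_nat N')
  end.

Definition meet (n m : nat) (s : Z) (a b : cell) (K : Z) : Prop :=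
  adj n m a b /\ facing s a K = dir a b.

Lemma trajectory_add n m s c K N1 N2 :
  trajectory n m s c K (N1 + N2) =
  trajectory n m s (trajectory n m s c K N1) (K + Z.of_nat N1) N2.
Proof.
  induction N2 as [| N2 IH]; simpl; [now rewrite Nat.add_0_r |].
  rewrite Nat.add_succ_r. simpl. rewrite IH. f_equal. lia.
Qed.

Section Walk.

Variables (n m : nat) (s : Z).
Hypothesis s_unit : (s = 1 \/ s = -1)%Z.

Lemma step_in_grid c K : in_grid n m c -> in_grid n m (step n m s c K).
Proof.
  intros Hc. unfold step. destruct (has_neighbour _ _ _ _) eqn:Eh; [| exact Hc].
  apply (neighbour_adj n m c _ Hc (facing_range _ _ _) Eh).
Qed.

Lemma trajectory_in_grid c K N : in_grid n m c -> in_grid n m (trajectory n m s c K N).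
Proof. intros Hc. induction N; simpl; auto using step_in_grid. Qed.

(* Adjacent circles carry opposite orientations and columns of opposite parity
   (horizontally) or equal columns (vertically), which makes facing symmetric. *)
Lemma facing_sym a b K : adj n m a b -> facing s a K = dir a b -> facing s b K = dir b a.
Proof.
  destruct a as [i j], b as [i' j']. unfold adj, in_grid; cbn [fst snd].
  intros [H1 [H2 [[-> [-> | ->]] | [-> [-> | ->]]]]]; unfold facing; cbn [fst snd];
    rewrite ?dir_right, ?dir_left, ?dir_down, ?dir_up,
            ?orientation_right, ?orientation_down, ?Nat2Z.inj_succ;
    match goal with |- context [orientation s ?c] =>
      destruct (orientation_unit s c s_unit) as [-> | ->] end; mod_lia.
Qed.

Lemma meet_sym a b K : meet n m s a b K -> meet n m s b a K.
Proof. intros [Hadj Hf]. split; [now apply adj_sym | now apply facing_sym]. Qed.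

Lemma facing_same_neighbour a b c K :
  adj n m a c -> facing s a K = dir a c -> adj n m b c -> facing s b K = dir b c -> a = b.
Proof.
  intros Ha Hfa Hb Hfb.
  assert (Fa := facing_sym _ _ _ Ha Hfa). assert (Fb := facing_sym _ _ _ Hb Hfb).
  rewrite (proj1 (adj_neighbour _ _ _ _ (adj_sym _ _ _ _ Ha))),
          (proj1 (adj_neighbour _ _ _ _ (adj_sym _ _ _ _ Hb))), <- Fa, <- Fb.
  reflexivity.
Qed.

Lemma step_inj a b K : in_grid n m a -> in_grid n m b -> a <> b ->
  ~ meet n m s a b K -> ~ meet n m s b a K -> step n m s a K <> step n m s b K.
Proof.
  intros Ha Hb Hne Hno_ab Hno_ba. unfold step.
  destruct (has_neighbour n m a (facing s a K)) eqn:Ea;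
  destruct (has_neighbour n m b (facing s b K)) eqn:Eb; intros Heq.
  - destruct (neighbour_adj n m a _ Ha (facing_range _ _ _) Ea) as [Aa Da].
    destruct (neighbour_adj n m b _ Hb (facing_range _ _ _) Eb) as [Ab Db].
    rewrite <- Heq in Ab, Db.
    apply Hne, (facing_same_neighbour _ _ _ K Aa (eq_sym Da) Ab (eq_sym Db)).
  - destruct (neighbour_adj n m a _ Ha (facing_range _ _ _) Ea) as [Aa Da].
    rewrite Heq in Aa, Da. now apply Hno_ab.
  - destruct (neighbour_adj n m b _ Hb (facing_range _ _ _) Eb) as [Ab Db].
    rewrite <- Heq in Ab, Db. now apply Hno_ba.
  - exact (Hne Heq).
Qed.

(* At even events every robot faces horizontally, at odd events vertically,
   and the vertical direction depends only on the row. *)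
Lemma facing_even c K : Z.even K = true ->
  facing s c K = ((K + 2 * Z.of_nat (snd c)) mod 4)%Z.
Proof.
  intros HK. unfold facing. apply Z.even_spec in HK. destruct HK as [l ->].
  destruct (orientation_unit s c s_unit) as [-> | ->]; mod_lia.
Qed.

Lemma facing_odd c K : Z.even K = false ->
  facing s c K = ((s * K + 2 * Z.of_nat (fst c)) mod 4)%Z.
Proof.
  intros HK. unfold facing, orientation.
  assert (HK' : Z.odd K = true) by now rewrite <- Z.negb_even, HK.
  apply Z.odd_spec in HK'. destruct HK' as [l ->].
  destruct c as [i j]; cbn [fst snd].
  destruct (Nat.even (i + j)) eqn:Hij.
  - apply Nat.even_spec in Hij. destruct Hij as [p Hp].
    assert (Z.of_nat i + Z.of_nat j = 2 * Z.of_nat p)%Z by lia.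
    destruct s_unit as [-> | ->]; mod_lia.
  - assert (Hij' : Nat.odd (i + j) = true) by now rewrite <- Nat.negb_even, Hij.
    apply Nat.odd_spec in Hij'. destruct Hij' as [p Hp].
    assert (Z.of_nat i + Z.of_nat j = 2 * Z.of_nat p + 1)%Z by lia.
    destruct s_unit as [-> | ->]; mod_lia.
Qed.

Lemma step_even c K : Z.even K = true ->
  fst (step n m s c K) = fst c /\
  snd (step n m s c K) =
    if Z.eqb ((K + 2 * Z.of_nat (snd c)) mod 4) 0
    then (if Nat.ltb (S (snd c)) m then S (snd c) else snd c)
    else (if Nat.ltb 0 (snd c) then pred (snd c) else snd c).
Proof.
  intros HK. unfold step. rewrite (facing_even c K HK).
  assert (Hr : ((K + 2 * Z.of_nat (snd c)) mod 4 = 0 \/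
                (K + 2 * Z.of_nat (snd c)) mod 4 = 2)%Z).
  { apply Z.even_spec in HK. destruct HK as [l ->]. mod_lia. }
  destruct Hr as [-> | ->]; unfold has_neighbour, neighbour; simpl;
    destruct (Nat.ltb _ _); simpl; auto.
Qed.

Lemma step_odd c K : Z.even K = false ->
  snd (step n m s c K) = snd c /\
  fst (step n m s c K) =
    if Z.eqb ((s * K + 2 * Z.of_nat (fst c)) mod 4) 1
    then (if Nat.ltb 0 (fst c) then pred (fst c) else fst c)
    else (if Nat.ltb (S (fst c)) n then S (fst c) else fst c).
Proof.
  intros HK. unfold step. rewrite (facing_odd c K HK).
  assert (Hr : ((s * K + 2 * Z.of_nat (fst c)) mod 4 = 1 \/
                (s * K + 2 * Z.of_nat (fst c)) mod 4 = 3)%Z).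
  { assert (HK' : Z.odd K = true) by now rewrite <- Z.negb_even, HK.
    apply Z.odd_spec in HK'. destruct HK' as [l ->]. destruct s_unit as [-> | ->]; mod_lia. }
  destruct Hr as [-> | ->]; unfold has_neighbour, neighbour; simpl;
    destruct (Nat.ltb _ _); simpl; auto.
Qed.

Lemma step_column_lt a b K : in_grid n m a -> in_grid n m b ->
  fst a = fst b -> (snd a < snd b)%nat -> Z.even K = true ->
  ~ meet n m s a b K -> ~ meet n m s b a K ->
  (snd (step n m s a K) < snd (step n m s b K))%nat.
Proof.
  intros Ha Hb Hrow Hlt HK Hab Hba.
  destruct a as [i ja], b as [i' jb]. cbn [fst snd] in *. subst i'.
  assert (Hnext : jb = S ja -> ((K + 2 * Z.of_nat ja) mod 4 <> 0)%Z /\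
                               ((K + 2 * Z.of_nat jb) mod 4 <> 2)%Z).
  { intros ->. destruct Ha, Hb; cbn [fst snd] in *. split; intros E.
    - apply Hab. split; [apply adj_right; lia |]. now rewrite dir_right, facing_even.
    - apply Hba. split; [apply adj_left; lia |]. now rewrite dir_left, facing_even. }
  destruct (step_even (i, ja) K HK) as [_ ->].
  destruct (step_even (i, jb) K HK) as [_ ->]. cbn [fst snd].
  apply Z.even_spec in HK. destruct HK as [l HK].
  destruct Ha, Hb; cbn [fst snd] in *.
  destruct (Z.eqb_spec ((K + 2 * Z.of_nat ja) mod 4) 0);
  destruct (Z.eqb_spec ((K + 2 * Z.of_nat jb) mod 4) 0);
  repeat match goal with |- context [Nat.ltb ?x ?y] => destruct (Nat.ltb_spec x y) end;
  try lia;
  destruct (Nat.eq_dec jb (S ja)) as [E | E]; try (destruct (Hnext E); mod_lia); mod_lia.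
Qed.

Lemma trajectory_two c K : trajectory n m s c K 2 = step n m s (step n m s c K) (K + 1).
Proof. simpl. now rewrite Z.add_0_r. Qed.

Lemma Z_even_add2 K : Z.even (K + 2) = Z.even K.
Proof. rewrite Z.even_add. simpl. now destruct (Z.even K). Qed.

Lemma Z_even_add1 K : Z.even (K + 1) = negb (Z.even K).
Proof. rewrite Z.even_add. simpl. now destruct (Z.even K). Qed.

Lemma column_after_two c K : Z.even K = true ->
  snd (trajectory n m s c K 2) =
    if Z.eqb ((K + 2 * Z.of_nat (snd c)) mod 4) 0
    then (if Nat.ltb (S (snd c)) m then S (snd c) else snd c)
    else (if Nat.ltb 0 (snd c) then pred (snd c) else snd c).
Proof.
  intros HK. rewrite trajectory_two.
  rewrite (proj1 (step_odd _ (K + 1) ltac:(now rewrite Z_even_add1, HK))).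
  exact (proj2 (step_even c K HK)).
Qed.

Lemma facing_right_reaches_last_column d : forall a K, in_grid n m a -> Z.even K = true ->
  ((K + 2 * Z.of_nat (snd a)) mod 4 = 0)%Z -> S (snd a + d) = m ->
  exists N, snd (trajectory n m s a K N) = (snd a + d)%nat.
Proof.
  induction d as [| d IH]; intros a K Ha HK Hr Hm; [exists O; simpl; lia |].
  set (a2 := trajectory n m s a K 2).
  assert (E2 : snd a2 = S (snd a)).
  { unfold a2. rewrite (column_after_two a K HK), Hr. simpl.
    now replace (Nat.ltb (S (snd a)) m) with true by (symmetry; apply Nat.ltb_lt; lia). }
  destruct (IH a2 (K + 2)%Z) as [N HN].
  - now apply trajectory_in_grid.
  - now rewrite Z_even_add2.
  - rewrite E2, Nat2Z.inj_succ. mod_lia.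
  - lia.
  - exists (2 + N)%nat. rewrite trajectory_add. fold a2. change (K + Z.of_nat 2)%Z with (K + 2)%Z.
    rewrite HN. lia.
Qed.

(* A robot facing left walks to the first column, where it turns around. *)
Lemma eventually_faces_right j : forall a K, snd a = j -> in_grid n m a ->
  Z.even K = true -> ((K + 2 * Z.of_nat j) mod 4 = 2)%Z ->
  exists N, in_grid n m (trajectory n m s a K N) /\ Z.even (K + Z.of_nat N) = true /\
    ((K + Z.of_nat N + 2 * Z.of_nat (snd (trajectory n m s a K N))) mod 4 = 0)%Z.
Proof.
  induction j as [| j IH]; intros a K Hj Ha HK Hr.
  - exists 2%nat. split; [now apply trajectory_in_grid |].
    split; [simpl Z.of_nat; now rewrite Z_even_add2 |].
    rewrite (column_after_two a K HK), Hj in *. simpl Z.of_nat in *.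
    replace ((K + 0) mod 4 =? 0)%Z with false by (symmetry; apply Z.eqb_neq; mod_lia).
    simpl. mod_lia.
  - set (a2 := trajectory n m s a K 2).
    assert (E2 : snd a2 = j).
    { unfold a2. rewrite (column_after_two a K HK), Hj.
      now replace ((K + 2 * Z.of_nat (S j)) mod 4 =? 0)%Z with false
        by (symmetry; apply Z.eqb_neq; mod_lia). }
    destruct (IH a2 (K + 2)%Z E2) as [N HN].
    + now apply trajectory_in_grid.
    + now rewrite Z_even_add2.
    + rewrite Nat2Z.inj_succ in Hr. mod_lia.
    + exists (2 + N)%nat. rewrite trajectory_add. fold a2.
      replace (K + Z.of_nat (2 + N))%Z with (K + Z.of_nat 2 + Z.of_nat N)%Z by lia.
      exact HN.
Qed.

Lemma reach_last_column_from_even a K : in_grid n m a -> Z.even K = true ->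
  exists N, snd (trajectory n m s a K N) = pred m.
Proof.
  intros Ha HK.
  assert (Hr : ((K + 2 * Z.of_nat (snd a)) mod 4 = 0 \/
                (K + 2 * Z.of_nat (snd a)) mod 4 = 2)%Z).
  { apply Z.even_spec in HK. destruct HK as [l ->]. mod_lia. }
  destruct Hr as [Hr | Hr].
  - destruct (facing_right_reaches_last_column (pred m - snd a) a K Ha HK Hr) as [N HN];
      destruct Ha; [lia |]. exists N. lia.
  - destruct (eventually_faces_right (snd a) a K eq_refl Ha HK Hr) as [N1 [G1 [E1 R1]]].
    set (a1 := trajectory n m s a K N1) in *.
    destruct (facing_right_reaches_last_column (pred m - snd a1) a1 _ G1 E1 R1) as [N2 HN2];
      destruct G1; [lia |].
    exists (N1 + N2)%nat. rewrite trajectory_add. fold a1. lia.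
Qed.

Lemma reach_last_column a K : in_grid n m a ->
  exists N, snd (trajectory n m s a K N) = pred m.
Proof.
  intros Ha. destruct (Z.even K) eqn:HK; [now apply reach_last_column_from_even |].
  destruct (reach_last_column_from_even (trajectory n m s a K 1) (K + Z.of_nat 1)%Z) as [N HN].
  - now apply trajectory_in_grid.
  - simpl Z.of_nat. now rewrite Z_even_add1, HK.
  - exists (1 + N)%nat. now rewrite trajectory_add.
Qed.

(* Robots in the same row stay in the same row (vertical moves depend only on
   the row) and keep their order unless they meet, but the left one
   eventually reaches the last column. *)
Lemma ordered_same_row_meet a b K : in_grid n m a -> in_grid n m b ->
  fst a = fst b -> (snd a < snd b)%nat -> exists N,
    meet n m s (trajectory n m s a K N) (trajectory n m s b K N) (K + Z.of_nat N) \/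
    meet n m s (trajectory n m s b K N) (trajectory n m s a K N) (K + Z.of_nat N).
Proof.
  intros Ha Hb Hrow Hlt. apply NNPP. intros Hno.
  assert (Inv : forall N, fst (trajectory n m s a K N) = fst (trajectory n m s b K N) /\
                          (snd (trajectory n m s a K N) < snd (trajectory n m s b K N))%nat).
  { induction N as [| N [IH1 IH2]]; [now split |]. simpl.
    destruct (Z.even (K + Z.of_nat N)) eqn:HK.
    - rewrite (proj1 (step_even _ _ HK)), (proj1 (step_even (trajectory n m s b K N) _ HK)).
      split; [exact IH1 |].
      apply step_column_lt; auto using trajectory_in_grid;
        intros Hm; apply Hno; exists N; auto.
    - destruct (step_odd (trajectory n m s a K N) _ HK) as [-> ->].
      destruct (step_odd (trajectory n m s b K N) _ HK) as [-> ->].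
      rewrite IH1. now split. }
  destruct (reach_last_column a K Ha) as [N HN].
  destruct (Inv N) as [_ Hcol].
  destruct (trajectory_in_grid b K N Hb). lia.
Qed.

Lemma same_row_meet a b K : in_grid n m a -> in_grid n m b ->
  fst a = fst b -> a <> b ->
  exists N, meet n m s (trajectory n m s a K N) (trajectory n m s b K N) (K + Z.of_nat N).
Proof.
  intros Ha Hb Hrow Hab.
  destruct (Nat.lt_trichotomy (snd a) (snd b)) as [H | [H | H]].
  - destruct (ordered_same_row_meet a b K Ha Hb Hrow H) as [N [HM | HM]];
      exists N; auto using meet_sym.
  - exfalso. apply Hab. destruct a, b; simpl in *; now subst.
  - destruct (ordered_same_row_meet b a K Hb Ha (eq_sym Hrow) H) as [N [HM | HM]];
      exists N; auto using meet_sym.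
Qed.

End Walk.

(** * Runs *)

Lemma eq_of_locally_constant {A : Type} (h : R -> A) a b : a <= b ->
  (forall t, a <= t <= b -> exists e, 0 < e /\ forall x, t <= x < t + e -> h x = h t) ->
  (forall t, a < t <= b -> exists e, 0 < e /\ forall x, t - e < x < t -> h x = h t) ->
  h b = h a.
Proof.
  (* least upper bound of the points up to which [h] stays equal to [h a] *)
  intros Hab HR HL.
  set (S := fun x => a <= x <= b /\ forall y, a <= y <= x -> h y = h a).
  assert (Sa : S a) by (split; [lra | intros y Hy; now replace y with a by lra]).
  assert (Sb : bound S) by (exists b; intros x [Hx _]; lra).
  destruct (completeness S Sb (ex_intro _ a Sa)) as [M [HM1 HM2]].
  assert (aM : a <= M) by now apply HM1.
  assert (Mb : M <= b) by (apply HM2; intros x [Hx _]; lra).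
  assert (Below : forall y, a <= y < M -> h y = h a).
  { intros y Hy. apply NNPP. intros Hne.
    enough (M <= y) by lra.
    apply HM2. intros x [Hx1 Hx2]. destruct (Rle_dec x y); auto.
    exfalso. apply Hne, Hx2. lra. }
  assert (AtM : h M = h a).
  { destruct (Req_dec M a) as [-> | HMa]; auto.
    destruct (HL M ltac:(lra)) as [e [He Hc]].
    set (y := Rmax a (M - e / 2)).
    assert (a <= y) by apply Rmax_l.
    assert (y < M) by (unfold y; apply Rmax_lub_lt; lra).
    assert (M - e / 2 <= y) by apply Rmax_r.
    rewrite <- (Hc y) by lra. apply Below; lra. }
  destruct (Req_dec M b) as [<- | HMb]; auto.
  exfalso.
  destruct (HR M ltac:(lra)) as [e [He Hc]].
  set (x := Rmin b (M + e / 2)).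
  assert (x <= b) by apply Rmin_l.
  assert (M < x) by (unfold x; apply Rmin_glb_lt; lra).
  assert (x <= M + e / 2) by apply Rmin_r.
  assert (S x).
  { split; [lra |]. intros y Hy. destruct (Rlt_dec y M); [apply Below; lra |].
    rewrite Hc by lra. exact AtM. }
  assert (x <= M) by now apply HM1.
  lra.
Qed.

Lemma event_bracket tau t : exists K, event_time tau K <= t < event_time tau (K + 1).
Proof.
  destruct (archimed (4 * (t - tau))) as [H1 H2].
  exists (up (4 * (t - tau)) - 1)%Z. unfold event_time.
  rewrite plus_IZR, minus_IZR. simpl. lra.
Qed.

Lemma present_forever (L : cell -> option R) w t : L w = None -> present L w t.
Proof. unfold present. now intros ->. Qed.

Section Run.

Variables (n m : nat) (f g : cell -> R) (loc : cell -> R -> cell) (L : cell -> option R).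
Variables (tau : R) (s : Z).
Hypothesis s_unit : (s = 1 \/ s = -1)%Z.
Hypothesis forms : forall c, in_grid n m c -> sync_form f g tau s c.
Hypothesis run : partial_scs_run n m f g loc L.

(* Between two events no robot is at a link position, so nobody switches. *)
Lemma loc_between_events u a b : in_grid n m u -> L u = None -> 0 <= a ->
  (forall t K, a < t < b -> t <> event_time tau K) ->
  forall t, a <= t < b -> loc u t = loc u a.
Proof.
  intros Hu HL Ha Hno t Ht. destruct run as [Hleft [Hright Hswitch]].
  apply (eq_of_locally_constant (loc u) a t); [lra | |].
  - intros x Hx. apply Hright; auto using present_forever; lra.
  - intros x Hx. destruct (Hleft u x Hu ltac:(lra) (present_forever L u x HL)) as [c Hc].
    destruct Hc as [[Hx0 _] | [Hx0 [e [He Hce]]]]; [lra |].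
    exists e; split; [exact He |]. intros y Hy. rewrite Hce by lra. symmetry.
    apply (Hswitch u x c Hu ltac:(lra) (present_forever L u x HL)); [right; eauto |].
    intros c' Hadj Hlink. exfalso.
    apply (proj1 (at_link_iff f g tau s c s_unit (forms c (proj1 Hadj)) c' x)) in Hlink.
    destruct Hlink as [K [HK _]]. exact (Hno x K ltac:(lra) HK).
Qed.

Lemma starving_switch w c K : starves n m f g loc L w -> in_grid n m w -> in_grid n m c ->
  0 < event_time tau K -> prev_at loc w (event_time tau K) c ->
  loc w (event_time tau K) = step n m s c K.
Proof.
  intros [HL Hstarve] Hw Hc HT Hprev. destruct run as [_ [_ Hswitch]].
  destruct (Hswitch w (event_time tau K) c Hw ltac:(lra) (present_forever L w _ HL) Hprev)
    as [Hmove Hstay].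
  assert (Hlink : forall c', adj n m c c' -> facing s c K = dir c c' ->
                    angeq (pos f g c (event_time tau K)) (phi c c')).
  { intros c' _ Hf. apply (at_link_iff f g tau s c s_unit (forms c Hc)). eauto. }
  unfold step. destruct (has_neighbour n m c (facing s c K)) eqn:Eh.
  - destruct (neighbour_adj n m c _ Hc (facing_range _ _ _) Eh) as [Hadj Hdir].
    apply Hmove; auto. apply (Hstarve _ c); auto.
  - apply Hstay. intros c' Hadj Hang. exfalso.
    apply (at_link_iff f g tau s c s_unit (forms c Hc)) in Hang.
    destruct Hang as [K' [HK' Hdir]]. apply event_time_inj in HK'. subst K'.
    destruct (adj_neighbour n m c c' Hadj) as [_ Hh]. congruence.
Qed.

Lemma initial_circle w : in_grid n m w -> L w = None ->
  loc w 0 = w \/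
  (adj n m w (loc w 0) /\ angeq (pos f g w 0) (phi w (loc w 0)) /\
   ~ occupied n m loc L (loc w 0) 0).
Proof.
  intros Hw HL. destruct run as [_ [_ Hswitch]].
  assert (Hprev : prev_at loc w 0 w) by now left.
  destruct (Hswitch w 0 w Hw (Rle_refl 0) (present_forever L w 0 HL) Hprev) as [Hmove Hstay].
  destruct (classic (exists c', adj n m w c' /\ angeq (pos f g w 0) (phi w c') /\
                                ~ occupied n m loc L c' 0)) as [[c' [A [B C]]] | Hno].
  - right. rewrite (Hmove c' A B C). auto.
  - left. apply Hstay. intros c' A B. apply NNPP. intros C. apply Hno. eauto.
Qed.

Lemma initial_circle_in_grid w : in_grid n m w -> L w = None -> in_grid n m (loc w 0).
Proof.
  intros Hw HL.
  destruct (initial_circle w Hw HL) as [-> | [Hadj _]]; [exact Hw | exact (proj1 (proj2 Hadj))].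
Qed.

Lemma occupied_initially w : in_grid n m w -> L w = None -> occupied n m loc L w 0.
Proof.
  intros Hw HL. exists w. split; [exact Hw | split; [now apply present_forever | now left]].
Qed.

Lemma initial_circles_distinct u v : in_grid n m u -> in_grid n m v -> u <> v ->
  L u = None -> L v = None -> loc u 0 <> loc v 0.
Proof.
  intros Hu Hv Huv HLu HLv.
  destruct (initial_circle u Hu HLu) as [Eu | [Au [Bu Cu]]];
  destruct (initial_circle v Hv HLv) as [Ev | [Av [Bv Cv]]]; intros Heq.
  - congruence.
  - apply Cv. rewrite <- Heq, Eu. now apply occupied_initially.
  - apply Cu. rewrite Heq, Ev. now apply occupied_initially.
  - apply (at_link_iff f g tau s u s_unit (forms u Hu)) in Bu.
    apply (at_link_iff f g tau s v s_unit (forms v Hv)) in Bv.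
    destruct Bu as [K [HK Fu]], Bv as [K' [HK' Fv]].
    rewrite HK in HK'. apply event_time_inj in HK'. subst K'.
    rewrite Heq in Au, Fu.
    exact (Huv (facing_same_neighbour n m s s_unit u v _ K Au Fu Av Fv)).
Qed.

Section Starving.

Variable K0 : Z.
Hypothesis before_start : event_time tau K0 <= 0.
Hypothesis after_start : 0 < event_time tau (K0 + 1).

Let orbit (w : cell) : nat -> cell := trajectory n m s (loc w 0) (K0 + 1).

Lemma arrival_after_interval w c N :
  (forall t, Rmax 0 (event_time tau (K0 + Z.of_nat N)) <= t <
             event_time tau (K0 + Z.of_nat N + 1) -> loc w t = c) ->
  0 < event_time tau (K0 + 1 + Z.of_nat N) /\
  prev_at loc w (event_time tau (K0 + 1 + Z.of_nat N)) c.
Proof.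
  intros Hc. replace (K0 + 1 + Z.of_nat N)%Z with (K0 + Z.of_nat N + 1)%Z by lia.
  set (T := event_time tau (K0 + Z.of_nat N + 1)).
  assert (HT : 0 < T).
  { eapply Rlt_le_trans; [exact after_start |]. apply event_time_le. lia. }
  assert (Ha : Rmax 0 (event_time tau (K0 + Z.of_nat N)) < T)
    by (apply Rmax_lub_lt; [exact HT | apply event_time_lt; lia]).
  split; [exact HT |]. right. split; [exact HT |].
  exists (T - Rmax 0 (event_time tau (K0 + Z.of_nat N))). split; [lra |].
  intros t Ht. apply Hc. fold T. lra.
Qed.

Lemma starving_follows_orbit w : starves n m f g loc L w -> in_grid n m w -> forall N,
  in_grid n m (orbit w N) /\
  forall t, Rmax 0 (event_time tau (K0 + Z.of_nat N)) <= t <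
            event_time tau (K0 + Z.of_nat N + 1) -> loc w t = orbit w N.
Proof.
  intros Hst Hw. assert (HL : L w = None) by apply Hst.
  assert (Hquiet : forall K t K', event_time tau K < t < event_time tau (K + 1) ->
                     t <> event_time tau K').
  { intros K t K' [H1 H2] ->. apply event_time_lt in H1, H2. lia. }
  induction N as [| N [IHgrid IHloc]].
  - split; [now apply initial_circle_in_grid |].
    rewrite Z.add_0_r, Rmax_left by lra. intros t Ht.
    apply (loc_between_events w 0 (event_time tau (K0 + 1))); auto; [lra |].
    intros x K Hx. apply (Hquiet K0). lra.
  - destruct (arrival_after_interval w _ N IHloc) as [HT Hprev].
    assert (Hswitch := starving_switch w _ _ Hst Hw IHgrid HT Hprev).
    assert (Horbit : orbit w (S N) = step n m s (orbit w N) (K0 + 1 + Z.of_nat N)) by reflexivity.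
    rewrite Horbit. split; [now apply step_in_grid |].
    replace (K0 + Z.of_nat (S N))%Z with (K0 + 1 + Z.of_nat N)%Z by lia.
    rewrite Rmax_right by lra. intros t Ht. rewrite <- Hswitch.
    apply (loc_between_events w _ (event_time tau (K0 + 1 + Z.of_nat N + 1))); auto; [lra |].
    intros x K Hx. apply (Hquiet (K0 + 1 + Z.of_nat N)%Z). lra.
Qed.

Lemma starving_positions t : 0 <= t -> exists N, forall w,
  starves n m f g loc L w -> in_grid n m w -> loc w t = orbit w N.
Proof.
  intros Ht. destruct (event_bracket tau t) as [K1 HK1].
  assert (HK01 : (K0 <= K1)%Z).
  { enough (K0 < K1 + 1)%Z by lia. apply (event_time_lt tau). lra. }
  exists (Z.to_nat (K1 - K0)). intros w Hst Hw.
  apply (starving_follows_orbit w Hst Hw).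
  replace (K0 + Z.of_nat (Z.to_nat (K1 - K0)))%Z with K1 by lia.
  split; [apply Rmax_lub |]; lra.
Qed.

(* A meeting would put the two robots at facing link positions simultaneously,
   so each would find the other's circle occupied. *)
Lemma starving_no_meet w w' N :
  starves n m f g loc L w -> in_grid n m w -> starves n m f g loc L w' -> in_grid n m w' ->
  ~ meet n m s (orbit w N) (orbit w' N) (K0 + 1 + Z.of_nat N).
Proof.
  intros Hst Hw Hst' Hw' [Hadj Hface].
  destruct (arrival_after_interval w _ N (proj2 (starving_follows_orbit w Hst Hw N)))
    as [HT Hprev].
  destruct (arrival_after_interval w' _ N (proj2 (starving_follows_orbit w' Hst' Hw' N)))
    as [_ Hprev'].
  apply (proj2 Hst _ _ _ HT Hprev Hadj).
  - apply (at_link_iff f g tau s _ s_unit (forms _ (proj1 Hadj))). eauto.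
  - exists w'. split; [exact Hw' | split; [apply present_forever, Hst' | exact Hprev']].
Qed.

Lemma starving_orbits_distinct u v :
  starves n m f g loc L u -> in_grid n m u -> starves n m f g loc L v -> in_grid n m v ->
  u <> v -> forall N, orbit u N <> orbit v N.
Proof.
  intros Hsu Hu Hsv Hv Huv N. induction N as [| N IH].
  - apply initial_circles_distinct; auto; [apply Hsu | apply Hsv].
  - change (step n m s (orbit u N) (K0 + 1 + Z.of_nat N) <>
            step n m s (orbit v N) (K0 + 1 + Z.of_nat N)).
    apply step_inj; auto.
    + apply (starving_follows_orbit u Hsu Hu).
    + apply (starving_follows_orbit v Hsv Hv).
    + exact (starving_no_meet u v N Hsu Hu Hsv Hv).
    + exact (starving_no_meet v u N Hsv Hv Hsu Hu).
Qed.

Lemma starving_rows_distinct u v :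
  starves n m f g loc L u -> in_grid n m u -> starves n m f g loc L v -> in_grid n m v ->
  u <> v -> forall t, 0 <= t -> fst (loc u t) <> fst (loc v t).
Proof.
  intros Hsu Hu Hsv Hv Huv t Ht Hrow.
  destruct (starving_positions t Ht) as [N HN].
  rewrite (HN u Hsu Hu), (HN v Hsv Hv) in Hrow.
  destruct (same_row_meet n m s s_unit _ _ (K0 + 1 + Z.of_nat N)
              (proj1 (starving_follows_orbit u Hsu Hu N))
              (proj1 (starving_follows_orbit v Hsv Hv N)) Hrow
              (starving_orbits_distinct u v Hsu Hu Hsv Hv Huv N)) as [N' Hmeet].
  unfold orbit in Hmeet.
  rewrite <- !trajectory_add, <- Z.add_assoc, <- Nat2Z.inj_add in Hmeet.
  exact (starving_no_meet u v _ Hsu Hu Hsv Hv Hmeet).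
Qed.

End Starving.

End Run.

Theorem theorem9 (n m : nat) (f g : cell -> R)
    (loc : cell -> R -> cell) (L : cell -> option R) :
  sync_schedule n m f g ->
  partial_scs_run n m f g loc L ->
  forall u v : cell, in_grid n m u -> in_grid n m v -> u <> v ->
  starves n m f g loc L u -> starves n m f g loc L v ->
  forall t, 0 <= t -> fst (loc u t) <> fst (loc v t).
Proof.
  intros Hsync Hrun u v Hu Hv Huv Hsu Hsv.
  assert (Hnm : (0 < n)%nat /\ (0 < m)%nat) by (destruct Hu; lia).
  destruct (sync_schedule_form n m f g Hsync (proj1 Hnm) (proj2 Hnm)) as [tau [s [Hs Hforms]]].
  destruct (event_bracket tau 0) as [K0 [HK0 HK1]].
  exact (starving_rows_distinct n m f g loc L tau s Hs Hforms Hrun K0 HK0 HK1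
           u v Hsu Hu Hsv Hv Huv).
Qed.
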